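(* The group $\mathsf{Aut}$ of all affine bijections $\mathcal{G}_N\to\mathcal{G}_N$ is finite, and every $\sigma\in\mathsf{Aut}$ is completely determined by its restriction to $\mathcal{I}$.
   Context: $\mathcal{G}_N$ is the set of real symmetric positive semi-definite $N\times N$ matrices with unit diagonal; $\mathcal{I}$ is the set of Ising matrices $\mathbf{s}\mathbf{s}^\top$, $\mathbf{s}\in\{\pm1\}^N$. *)

From HB Require Import structures.
From mathcomp Require Import all_boot all_order all_algebra.
From mathcomp Require Import reals.
Set Implicit Arguments. Unset Strict Implicit. Unset Printing Implicit Defensive.
Import Order.TTheory GRing.Theory Num.Theory.
Local Open Scope ring_scope.

Definition psd (R : realType) (N : nat) (A : 'M[R]_N) : Prop :=
  forall x : 'cV[R]_N, 0 <= (x^T *m A *m x) 0 0.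

Definition elliptope (R : realType) (N : nat) (A : 'M[R]_N) : Prop :=
  A^T = A /\ psd A /\ (forall i, A i i = 1).

Definition ising (R : realType) (N : nat) (A : 'M[R]_N) : Prop :=
  exists s : 'cV[R]_N, (forall i, s i 0 = 1 \/ s i 0 = -1) /\ A = s *m s^T.

Definition affine_aut (R : realType) (N : nat) (f : 'M[R]_N -> 'M[R]_N) : Prop :=
  (forall A, elliptope A -> elliptope (f A)) /\
  (forall A B, elliptope A -> elliptope B -> f A = f B -> A = B) /\
  (forall B, elliptope B -> exists2 A, elliptope A & f A = B) /\
  (forall A B (t : R), elliptope A -> elliptope B -> 0 <= t -> t <= 1 ->
     f (t *: A + (1 - t) *: B) = t *: f A + (1 - t) *: f B).

(* Every X in G_N satisfies the affine identity
     X + sum_(k,l) w_kl (J + S_kl)/2 = J + sum_(k,l) w_kl (S_k + S_l)/2,  w_kl = (1 - X_kl)/4 >= 0,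
   where J is the all-ones matrix and S_k, S_kl are the Ising matrices of the sign vectors
   flipped at k, resp. at k and l.  After normalising the weights both sides are convex
   combinations, so an affine map on G_N is determined by its values on Ising matrices.
   Finiteness then follows once affine automorphisms map Ising matrices to Ising matrices.
   These are exactly the sharp vertices of G_N, the points B with an affine psi vanishing at B
   such that |Y - B|_1 <= c psi(Y) on G_N: for an Ising matrix s s^T take
   psi(Y) = sum_(k,l) (1 - s_k s_l Y_kl); sharpness is transported by affine automorphisms,
   which are Lipschitz by the identity above; and if |B_ij| < 1, the congruences S B S^T with
   S = 1 + x e_i e_i^T + y e_i e_j^T that stay in G_N trace an ellipse through B along which
   |Y_ij - B_ij| = |x B_ij + y| is dominated by no linear function of (x, y). *)

From HB Require Import structures.
From mathcomp Require Import all_boot all_order all_algebra.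
From mathcomp Require Import reals.
From mathcomp Require Import lra ring.
From Stdlib Require Import ClassicalEpsilon.
Import Order.TTheory GRing.Theory Num.Theory.
Set Implicit Arguments. Unset Strict Implicit. Unset Printing Implicit Defensive.
Local Open Scope ring_scope.

Lemma ellipse_not_linearly_dominated (R : realFieldType) (r a b : R) : r ^+ 2 < 1 ->
  exists x y, x * x + 2 * x * y * r + y * y + 2 * (x + y * r) = 0 /\
              a * x + b * y < `|x * r + y|.
Proof.
move=> r2_lt1.
have d_gt0 : 0 < 1 - r ^+ 2 by rewrite subr_gt0.
pose e := (1 - r ^+ 2) / (`|a| + 1).
have a1_gt0 : 0 < `|a| + 1 by rewrite ltr_wpDl.
have e_gt0 : 0 < e by rewrite divr_gt0.
have ea_lt : e * `|a| < 1 - r ^+ 2.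
  by rewrite /e mulrAC ltr_pdivrMr // ltr_pM2l // ltrDl ltr01.
pose D := e * e + (1 - r ^+ 2).
have D_gt0 : 0 < D by rewrite addr_gt0 // mulr_gt0.
pose t := 2 * e / D.
have tD : t * D = 2 * e by rewrite /t mulfVK // gt_eqF.
have t_gt0 : 0 < t by rewrite divr_gt0 // mulr_gt0.
(* For s = 1 and s = -1 these are points of the ellipse on either side of its tangent
   x + y r = 0 at the origin: the values of x r + y there differ by 2 t (1 - r^2), while
   those of a x + b y add up to only -2 a e t. *)
pose x s := - (e + r * s) * t; pose y s := s * t.
have on_ellipse s : s ^+ 2 = 1 ->
    x s * x s + 2 * x s * y s * r + y s * y s + 2 * (x s + y s * r) = 0.
  move=> s2; have -> : x s * x s + 2 * x s * y s * r + y s * y s + 2 * (x s + y s * r)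
                       = t * (t * (e * e + s ^+ 2 * (1 - r ^+ 2))) - 2 * e * t.
    by rewrite /x /y; ring.
  by rewrite s2 mul1r tD; ring.
have [s s2 lt_s] : exists2 s, s ^+ 2 = 1 & a * x s + b * y s < `|x s * r + y s|.
  have [lt1|ge1] := ltrP (a * x 1 + b * y 1) `|x 1 * r + y 1|; first by exists 1; rewrite ?expr1n.
  have [lt2|ge2] := ltrP (a * x (-1) + b * y (-1)) `|x (-1) * r + y (-1)|.
    by exists (-1); rewrite ?sqrrN ?expr1n.
  have n1 := ler_norm (x 1 * r + y 1).
  have n2 := ler_norm (- (x (-1) * r + y (-1))); rewrite normrN in n2.
  have na : e * t * - a <= e * t * `|a|.
    by rewrite ler_pM2l ?(mulr_gt0 e_gt0 t_gt0) // -normrN ler_norm.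
  have : t * (1 - r ^+ 2) <= t * (e * `|a|) by rewrite /x /y /= in n1 n2 ge1 ge2; lra.
  rewrite ler_pM2l //; lra.
by exists (x s), (y s); split; [exact: on_ellipse|].
Qed.

Section AffineOnConvex.
Variables (R : realFieldType) (U : lmodType R).

Definition convex_pred (P : U -> Prop) :=
  forall A B t, P A -> P B -> 0 <= t -> t <= 1 -> P (t *: A + (1 - t) *: B).

Definition affine_on (P : U -> Prop) (V : lmodType R) (phi : U -> V) :=
  forall A B t, P A -> P B -> 0 <= t -> t <= 1 ->
    phi (t *: A + (1 - t) *: B) = t *: phi A + (1 - t) *: phi B.

Lemma half_combE (V : lmodType R) (A B : V) : 2^-1 *: (A + B) = 2^-1 *: A + (1 - 2^-1) *: B.
Proof. by rewrite scalerDr; congr (_ + _ *: _); field. Qed.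

Variables (P : U -> Prop) (V : lmodType R) (phi : U -> V).
Hypotheses (P_convex : convex_pred P) (phi_aff : affine_on P phi).

Let half_ge0 : 0 <= 2^-1 :> R. Proof. by rewrite invr_ge0. Qed.
Let half_le1 : 2^-1 <= 1 :> R. Proof. by rewrite invf_le1 // ler1n. Qed.

Lemma convex_pred_midpoint A B : P A -> P B -> P (2^-1 *: (A + B)).
Proof. by move=> PA PB; rewrite half_combE; apply: P_convex. Qed.

Lemma affine_on_midpoint A B : P A -> P B ->
  phi (2^-1 *: (A + B)) = 2^-1 *: (phi A + phi B).
Proof. by move=> PA PB; rewrite !half_combE phi_aff. Qed.

Lemma affine_on_comb (I : eqType) (r : seq I) (w : I -> R) (p : I -> U) :
    (forall i, 0 <= w i) -> (forall i, P (p i)) -> \sum_(i <- r) w i = 1 ->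
  P (\sum_(i <- r) w i *: p i) /\
  phi (\sum_(i <- r) w i *: p i) = \sum_(i <- r) w i *: phi (p i).
Proof.
move=> + Pp; elim: r w => [|x r IH] w w_ge0.
  by rewrite big_nil => /eqP; rewrite eq_sym oner_eq0.
rewrite !big_cons; set s := \sum_(y <- r) w y => wx_s.
have s_ge0 : 0 <= s by exact: sumr_ge0.
have [s0|s_neq0] := eqVneq s 0.
  have sum0 (W : lmodType R) (v : I -> W) : \sum_(y <- r) w y *: v y = 0.
    move/eqP: s0; rewrite /s psumr_eq0 // => /allP w0.
    by rewrite big_seq big1 // => y /w0 /eqP ->; rewrite scale0r.
  have -> : w x = 1 by lra.
  by rewrite !sum0 !addr0 !scale1r.
have s_unit : s \is a GRing.unit by rewrite unitfE.
have normE (W : lmodType R) (v : I -> W) :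
    \sum_(y <- r) w y *: v y = s *: \sum_(y <- r) (w y / s) *: v y.
  by rewrite scaler_sumr; apply: eq_bigr => y _; rewrite scalerA mulrC mulrVK.
have wn_sum : \sum_(y <- r) w y / s = 1 by rewrite -mulr_suml divrr.
have [IHP IHphi] := IH _ (fun y => divr_ge0 (w_ge0 y) s_ge0) wn_sum.
rewrite (normE _ p) (normE _ (phi \o p)) -IHphi.
set q := \sum_(y <- r) (w y / s) *: p y in IHP *.
have -> : s = 1 - w x by lra.
have wx_ge0 := w_ge0 x.
by split; [apply: P_convex | apply: phi_aff] => //; lra.
Qed.

Lemma affine_on_sum_eq (I : eqType) (r : seq I) (w : I -> R) (p q : I -> U) :
    (forall i, 0 <= w i) -> 0 < \sum_(i <- r) w i ->
    (forall i, P (p i)) -> (forall i, P (q i)) ->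
    \sum_(i <- r) w i *: p i = \sum_(i <- r) w i *: q i ->
  \sum_(i <- r) w i *: phi (p i) = \sum_(i <- r) w i *: phi (q i).
Proof.
set W := \sum_(i <- r) w i => w_ge0 W_gt0 Pp Pq.
have W_unit : W \is a GRing.unit by rewrite unitfE gt_eqF.
have wn_ge0 i : 0 <= w i / W by rewrite divr_ge0 // ltW.
have wn_sum : \sum_(i <- r) w i / W = 1 by rewrite -mulr_suml divrr.
have normE (W' : lmodType R) (v : I -> W') :
    \sum_(i <- r) w i *: v i = W *: \sum_(i <- r) (w i / W) *: v i.
  by rewrite scaler_sumr; apply: eq_bigr => i _; rewrite scalerA mulrC mulrVK.
have [_ phi_p] := affine_on_comb wn_ge0 Pp wn_sum.
have [_ phi_q] := affine_on_comb wn_ge0 Pq wn_sum.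
rewrite (normE _ p) (normE _ q) (normE _ (phi \o p)) (normE _ (phi \o q)) -phi_p -phi_q.
by move/(scalerI (lt0r_neq0 W_gt0))->.
Qed.

End AffineOnConvex.

Lemma affine_on_comp (R : realFieldType) (U V : lmodType R) (P : U -> Prop)
    (g : U -> U) (psi : U -> V) :
  (forall A, P A -> P (g A)) -> affine_on P g -> affine_on P psi ->
  affine_on P (psi \o g).
Proof.
by move=> Pg g_aff psi_aff A B t PA PB t0 t1; rewrite /= g_aff // psi_aff //; apply: Pg.
Qed.

Lemma affine_on_inverse (R : realFieldType) (U : lmodType R) (P : U -> Prop) (f : U -> U) :
    convex_pred P -> (forall A B, P A -> P B -> f A = f B -> A = B) ->
    (forall B, P B -> exists2 A, P A & f A = B) -> affine_on P f ->
  exists g : U -> U, (forall B, P B -> P (g B) /\ f (g B) = B) /\ affine_on P g.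
Proof.
move=> P_convex f_inj f_surj f_aff.
pose g B := epsilon (inhabits 0) (fun A => P A /\ f A = B).
have gK B : P B -> P (g B) /\ f (g B) = B.
  move=> PB; apply: (epsilon_spec (inhabits 0) (fun A => P A /\ f A = B)).
  by have [A PA fA] := f_surj B PB; exists A.
exists g; split; first exact: gK.
move=> A B t PA PB t0 t1.
have [PgA fgA] := gK A PA; have [PgB fgB] := gK B PB.
have [PgAB fgAB] := gK _ (P_convex A B t PA PB t0 t1).
by apply: f_inj => //; [exact: P_convex | rewrite fgAB f_aff // fgA fgB].
Qed.

Section Elliptope.
Variables (R : realType) (N : nat).
Implicit Types (A B X Y : 'M[R]_N) (i j k l m n : 'I_N).
Local Notation ell := (@elliptope R N).

Definition ecol k : 'cV[R]_N := delta_mx k 0.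
Definition bform A (u v : 'cV[R]_N) : R := (u^T *m A *m v) 0 0.

Lemma bform_ecol A k l : bform A (ecol k) (ecol l) = A k l.
Proof. by rewrite /bform /ecol trmx_delta -rowE -colE !mxE. Qed.

Lemma bformDl A u v w : bform A (u + v) w = bform A u w + bform A v w.
Proof. by rewrite /bform linearD /= !mulmxDl mxE. Qed.
Lemma bformDr A u v w : bform A w (u + v) = bform A w u + bform A w v.
Proof. by rewrite /bform !mulmxDr mxE. Qed.
Lemma bformZl A a u w : bform A (a *: u) w = a * bform A u w.
Proof. by rewrite /bform linearZ /= -!scalemxAl mxE. Qed.
Lemma bformZr A a u w : bform A w (a *: u) = a * bform A w u.
Proof. by rewrite /bform -!scalemxAr mxE. Qed.
Lemma bformNl A u w : bform A (- u) w = - bform A u w.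
Proof. by rewrite -scaleN1r bformZl mulN1r. Qed.
Lemma bformNr A u w : bform A w (- u) = - bform A w u.
Proof. by rewrite -scaleN1r bformZr mulN1r. Qed.

Definition bformE := (bformDl, bformDr, bformNl, bformNr, bformZl, bformZr, bform_ecol).

Lemma elliptope_sym A k l : ell A -> A k l = A l k.
Proof. by case=> symA _; rewrite -{1}symA mxE. Qed.

Lemma elliptope_norm_le1 A k l : ell A -> `|A k l| <= 1.
Proof.
move=> ellA; have [_ [psdA diagA]] := ellA.
have quad (s : R) : s ^+ 2 = 1 -> s * A k l <= 1.
  move=> s2; have := psdA (ecol k - s *: ecol l).
  rewrite -/(bform _ _ _) !bformE !diagA (elliptope_sym l k ellA); nra.
rewrite ler_norml; have := quad 1 (expr1n _ _).
by have := quad (-1); rewrite sqrrN expr1n => /(_ erefl); lra.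
Qed.

Lemma elliptope_convex : convex_pred ell.
Proof.
move=> A B t [symA [psdA diagA]] [symB [psdB diagB]] t0 t1; split; [|split].
- by rewrite linearD !linearZ /= symA symB.
- move=> u; rewrite mulmxDr mulmxDl -!scalemxAr -!scalemxAl mxE.
  apply: addr_ge0; rewrite mxE; apply: mulr_ge0 => //.
  by rewrite subr_ge0.
- by move=> k; rewrite !mxE diagA diagB; lra.
Qed.

Definition outer (v : 'I_N -> R) : 'M[R]_N := \matrix_(m, n) (v m * v n).

Lemma ising_outer v : (forall m, v m = 1 \/ v m = -1) -> ising (outer v).
Proof.
move=> v_pm; exists (\col_m v m); split; first by move=> m; rewrite mxE.
by apply/matrixP => m n; rewrite !mxE big_ord1 !mxE.
Qed.

Lemma ising_elliptope A : ising A -> ell A.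
Proof.
move=> [s [s_pm ->]]; split; [|split].
- by rewrite trmx_mul trmxK.
- move=> u; rewrite !mulmxA -(mulmxA (u^T *m s)).
  have -> : u^T *m s = (s^T *m u)^T by rewrite trmx_mul trmxK.
  by rewrite !mxE big_ord1 mxE sqr_ge0.
- by move=> k; rewrite !mxE big_ord1 mxE; case: (s_pm k) => ->; rewrite ?mulrNN mulr1.
Qed.

Definition flip k m : R := if k == m then -1 else 1.

Lemma flip_pm k m : flip k m = 1 \/ flip k m = -1.
Proof. by rewrite /flip; case: eqP; [right | left]. Qed.

Lemma pmM (a b : R) : a = 1 \/ a = -1 -> b = 1 \/ b = -1 -> a * b = 1 \/ a * b = -1.
Proof. by case=> ->; case=> ->; rewrite ?mulr1 ?mulrN1 ?opprK; auto. Qed.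

Local Notation J := (outer (fun=> 1)).
Definition flip_outer k := outer (flip k).
Definition flip2_outer k l := outer (fun m => flip k m * flip l m).

Lemma ising_J : ising J. Proof. by apply: ising_outer; left. Qed.
Lemma ising_flip_outer k : ising (flip_outer k).
Proof. exact/ising_outer/flip_pm. Qed.
Lemma ising_flip2_outer k l : ising (flip2_outer k l).
Proof. by apply: ising_outer => m; apply: pmM; apply: flip_pm. Qed.

Lemma sumr_delta (F : 'I_N -> R) m : \sum_k (k == m)%:R * F k = F m.
Proof.
by rewrite (bigD1 m) //= eqxx mul1r big1 ?addr0 // => k /negbTE ->; rewrite mul0r.
Qed.

Lemma sumr_delta2 (F : 'I_N -> R) m n :
  \sum_k ((k == m)%:R + (k == n)%:R) * F k = F m + F n.
Proof. by rewrite -!sumr_delta -big_split; apply: eq_bigr => k _; rewrite mulrDl. Qed.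

Definition cut_weight X (p : 'I_N * 'I_N) : R := (1 - X p.1 p.2) / 4.
Definition mid_flip2 (p : 'I_N * 'I_N) := 2^-1 *: (J + flip2_outer p.1 p.2).
Definition mid_flips (p : 'I_N * 'I_N) := 2^-1 *: (flip_outer p.1 + flip_outer p.2).

Lemma cut_weight_ge0 X p : ell X -> 0 <= cut_weight X p.
Proof.
move=> ellX; have := elliptope_norm_le1 p.1 p.2 ellX; rewrite ler_norml => /andP[_ le1].
by rewrite divr_ge0 ?subr_ge0.
Qed.

Lemma one_sub_flipM k m n :
  1 - flip k m * flip k n = if m == n then 0 else 2 * ((k == m)%:R + (k == n)%:R).
Proof.
rewrite /flip; have [->|neq_mn] := eqVneq m n.
  by case: (k == n); rewrite ?mulrNN mulr1 subrr.
case: (eqVneq k m) => [km|_]; case: (eqVneq k n) => [kn|_] //=; try lra.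
by move: neq_mn; rewrite -km -kn eqxx.
Qed.

Lemma sum_cut_weight_flip X m n : ell X ->
  \sum_p cut_weight X p * ((1 - flip p.1 m * flip p.1 n) * (1 - flip p.2 m * flip p.2 n))
  = 2 * (1 - X m n).
Proof.
move=> ellX; have [_ [_ diagX]] := ellX.
have [->|neq_mn] := eqVneq m n.
  by rewrite diagX subrr mulr0 big1 // => p _; rewrite one_sub_flipM eqxx mul0r mulr0.
pose d k := (k == m)%:R + (k == n)%:R : R.
have -> : \sum_p cut_weight X p * ((1 - flip p.1 m * flip p.1 n) * (1 - flip p.2 m * flip p.2 n))
          = \sum_k \sum_l 4 * (d k * (d l * cut_weight X (k, l))).
  by rewrite pair_bigA; apply: eq_bigr => -[k l] _; rewrite !one_sub_flipM !ifN //= /d; ring.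
under eq_bigr => k _ do rewrite -!mulr_sumr sumr_delta2.
rewrite -mulr_sumr sumr_delta2 /cut_weight /= !diagX (elliptope_sym n m ellX); lra.
Qed.

Lemma elliptope_decomposition X : ell X ->
  X + \sum_p cut_weight X p *: mid_flip2 p = J + \sum_p cut_weight X p *: mid_flips p.
Proof.
move=> ellX; apply/matrixP => m n; rewrite !mxE !summxE.
under eq_bigr do rewrite !mxE.
under [in RHS]eq_bigr do rewrite !mxE.
have := sum_cut_weight_flip m n ellX.
have -> : \sum_p cut_weight X p * ((1 - flip p.1 m * flip p.1 n) * (1 - flip p.2 m * flip p.2 n))
  = 2 * \sum_p cut_weight X p *
          (2^-1 * (1 * 1 + flip p.1 m * flip p.2 m * (flip p.1 n * flip p.2 n)))
    - 2 * \sum_p cut_weight X p * (2^-1 * (flip p.1 m * flip p.1 n + flip p.2 m * flip p.2 n)).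
  by rewrite !mulr_sumr -sumrB; apply: eq_bigr => p _; field.
rewrite mul1r; lra.
Qed.

Lemma elliptope_J : ell J. Proof. exact: ising_elliptope ising_J. Qed.

Lemma elliptope_mid_flip2 p : ell (mid_flip2 p).
Proof.
by rewrite /mid_flip2; apply: (convex_pred_midpoint elliptope_convex); apply/ising_elliptope;
  [exact: ising_J | exact: ising_flip2_outer].
Qed.

Lemma elliptope_mid_flips p : ell (mid_flips p).
Proof.
rewrite /mid_flips; apply: (convex_pred_midpoint elliptope_convex).
all: exact/ising_elliptope/ising_flip_outer.
Qed.

Lemma affine_on_elliptope_sum (V : lmodType R) (phi : 'M[R]_N -> V) X :
    affine_on ell phi -> ell X ->
  phi X + \sum_p cut_weight X p *: phi (mid_flip2 p)
  = phi J + \sum_p cut_weight X p *: phi (mid_flips p).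
Proof.
move=> phi_aff ellX.
pose w (o : option ('I_N * 'I_N)) := if o is Some p then cut_weight X p else 1.
pose r := None :: map Some (index_enum _) : seq (option ('I_N * 'I_N)).
have sumE (W : lmodType R) (v : option ('I_N * 'I_N) -> W) :
    \sum_(o <- r) w o *: v o = v None + \sum_p cut_weight X p *: v (Some p).
  by rewrite big_cons big_map scale1r.
have w_ge0 o : 0 <= w o by case: o => [p|] //=; exact: cut_weight_ge0.
have sumw_gt0 : 0 < \sum_(o <- r) w o.
  by rewrite big_cons big_map ltr_pwDl // sumr_ge0 // => p _; exact: cut_weight_ge0.
have := affine_on_sum_eq elliptope_convex phi_aff w_ge0 sumw_gt0
  (p := fun o => if o is Some p then mid_flip2 p else X)
  (q := fun o => if o is Some p then mid_flips p else J).
rewrite !sumE; apply; first by case=> [p|] //=; exact: elliptope_mid_flip2.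
- by case=> [p|]; [exact: elliptope_mid_flips | exact: elliptope_J].
- exact: elliptope_decomposition.
Qed.

Definition slope (V : lmodType R) (phi : 'M[R]_N -> V) p : V :=
  4^-1 *: (phi (mid_flip2 p) - phi (mid_flips p)).

Lemma affine_on_elliptope_diff (V : lmodType R) (phi : 'M[R]_N -> V) Y B :
    affine_on ell phi -> ell Y -> ell B ->
  phi Y - phi B = \sum_p (Y p.1 p.2 - B p.1 p.2) *: slope phi p.
Proof.
move=> phi_aff ellY ellB.
have phiE X : ell X ->
    phi X = phi J + \sum_p cut_weight X p *: (phi (mid_flips p) - phi (mid_flip2 p)).
  move=> ellX; apply: (addIr (\sum_p cut_weight X p *: phi (mid_flip2 p))).
  rewrite affine_on_elliptope_sum // -addrA -big_split /=.
  by congr (_ + _); apply: eq_bigr => p _; rewrite -scalerDr subrK.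
rewrite (phiE Y) // (phiE B) // opprD addrACA subrr add0r -sumrB.
apply: eq_bigr => p _; rewrite -scalerBl /slope scalerA.
rewrite -[phi (mid_flips p) - _]opprB scalerN -scaleNr.
by congr (_ *: _); rewrite /cut_weight; field.
Qed.

Lemma slopeE (V : lmodType R) (h : 'M[R]_N -> V) p : affine_on ell h ->
  slope h p = 4^-1 *: (2^-1 *: (h J + h (flip2_outer p.1 p.2))
                       - 2^-1 *: (h (flip_outer p.1) + h (flip_outer p.2))).
Proof.
move=> h_aff; rewrite /slope /mid_flip2 /mid_flips !(affine_on_midpoint h_aff) //.
all: apply/ising_elliptope.
all: by [exact: ising_J | exact: ising_flip_outer | exact: ising_flip2_outer].
Qed.

Lemma affine_aut_eq_on_ising f g : affine_aut f -> affine_aut g ->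
  (forall A, ising A -> f A = g A) -> forall A, ell A -> f A = g A.
Proof.
move=> [_ [_ [_ f_aff]]] [_ [_ [_ g_aff]]] fg A ellA.
rewrite -(subrK (f J) (f A)) -(subrK (g J) (g A)).
rewrite !(affine_on_elliptope_diff _ ellA elliptope_J) // fg; last exact: ising_J.
congr (_ + _); apply: eq_bigr => p _; rewrite !slopeE // !fg //.
all: by [exact: ising_J | exact: ising_flip_outer | exact: ising_flip2_outer].
Qed.

Definition mx_dist Y B : R := \sum_k \sum_l `|Y k l - B k l|.

Lemma entry_le_mx_dist Y B k l : `|Y k l - B k l| <= mx_dist Y B.
Proof.
have le_sum (I : finType) (F : I -> R) (x : I) : (forall y, 0 <= F y) -> F x <= \sum_y F y.
  by move=> F_ge0; rewrite (bigD1 x) //= lerDl sumr_ge0.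
apply: le_trans (le_sum _ _ k _) => [|?]; last exact: sumr_ge0.
exact: le_sum.
Qed.

Lemma affine_on_elliptope_lipschitz f B : affine_on ell f -> ell B ->
  exists2 K, 0 < K & forall Y, ell Y -> mx_dist (f Y) (f B) <= K * mx_dist Y B.
Proof.
move=> f_aff ellB.
pose K := \sum_m \sum_n \sum_p `|slope f p m n|.
have K_ge0 : 0 <= K by do 3!(apply: sumr_ge0 => ? _).
exists (K + 1) => [|Y ellY]; first by rewrite ltr_wpDl.
have entry_le m n : `|f Y m n - f B m n| <= mx_dist Y B * \sum_p `|slope f p m n|.
  have := congr1 (fun C : 'M[R]_N => C m n) (affine_on_elliptope_diff f_aff ellY ellB).
  rewrite /= !mxE summxE => ->; rewrite mulr_sumr.
  apply: le_trans (ler_norm_sum _ _ _) _; apply: ler_sum => p _.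
  by rewrite mxE normrM ler_wpM2r // entry_le_mx_dist.
apply: (@le_trans _ _ (mx_dist Y B * K)).
  rewrite /mx_dist /K mulr_sumr; apply: ler_sum => m _.
  by rewrite mulr_sumr; apply: ler_sum => n _.
by rewrite mulrC ler_wpM2r ?lerDl // sumr_ge0 // => k _; exact: sumr_ge0.
Qed.

Definition sharp_vertex B := exists (psi : 'M[R]_N -> R^o) (c : R),
  [/\ 0 < c, affine_on ell psi, psi B = 0 & forall Y, ell Y -> mx_dist Y B <= c * psi Y].

Lemma ising_sharp_vertex B : ising B -> sharp_vertex B.
Proof.
move=> [s [s_pm ->]].
have sE k l : (s *m s^T) k l = s k 0 * s l 0 by rewrite !mxE big_ord1 mxE.
have ss_pm k l : s k 0 * s l 0 = 1 \/ s k 0 * s l 0 = -1 by exact: pmM.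
exists (fun Y => \sum_k \sum_l (1 - s k 0 * s l 0 * Y k l)), 1; split.
- exact: ltr01.
- move=> Y Z t _ _ _ _; rewrite /GRing.scale /= !mulr_sumr -big_split.
  apply: eq_bigr => k _; rewrite !mulr_sumr -big_split; apply: eq_bigr => l _.
  by rewrite !mxE /=; ring.
- rewrite big1 // => k _; rewrite big1 // => l _; rewrite sE.
  by case: (ss_pm k l) => ->; rewrite ?mulr1 ?mulrNN ?mulr1 subrr.
- move=> Y ellY; rewrite mul1r /mx_dist; apply: ler_sum => k _; apply: ler_sum => l _.
  have := elliptope_norm_le1 k l ellY; rewrite sE ler_norml => /andP[ge le].
  by case: (ss_pm k l) => ->; [rewrite ler0_norm | rewrite ger0_norm]; lra.
Qed.

Lemma affine_aut_sharp_vertex f B :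
  affine_aut f -> ell B -> sharp_vertex B -> sharp_vertex (f B).
Proof.
move=> [f_ell [f_inj [f_surj f_aff]]] ellB [psi [c [c_gt0 psi_aff psiB psi_ge]]].
have [g [gK g_aff]] := affine_on_inverse elliptope_convex f_inj f_surj f_aff.
have [K K_gt0 f_lip] := affine_on_elliptope_lipschitz f_aff ellB.
exists (psi \o g), (K * c); split.
- exact: mulr_gt0.
- by apply: affine_on_comp g_aff psi_aff => A /gK[].
- have [ellgfB gfB] := gK _ (f_ell _ ellB).
  by rewrite /= (f_inj _ _ ellgfB ellB gfB).
- move=> Z ellZ; have [ellgZ fgZ] := gK _ ellZ.
  rewrite -[in mx_dist Z _]fgZ; apply: le_trans (f_lip _ ellgZ) _.
  by rewrite -mulrA; apply: ler_wpM2l; [exact: ltW | exact: psi_ge].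
Qed.

Lemma elliptope_sq1_ising B : ell B -> (forall k l, B k l ^+ 2 = 1) -> ising B.
Proof.
move=> ellB B_sq1; have [_ [psdB diagB]] := ellB.
have B_pm k l : B k l = 1 \/ B k l = -1.
  by move/eqP: (B_sq1 k l); rewrite sqrf_eq1 => /orP[] /eqP; [left | right].
case: (posnP N) => [N0 | N_gt0].
  have no_index (i : 'I_N) : False by case: i => i; rewrite N0.
  by exists 0; split=> [i|]; [|apply/matrixP => i]; case: (no_index i).
pose k0 := Ordinal N_gt0.
exists (\col_k B k0 k); split=> [k|]; first by rewrite mxE.
apply/matrixP => l m; rewrite !mxE big_ord1 !mxE.
have [<-|_] := eqVneq l m; first by rewrite diagB -expr2 B_sq1.
have := psdB (ecol k0 - B k0 l *: ecol l - B k0 m *: ecol m).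
rewrite -/(bform _ _ _) !bformE !diagB (elliptope_sym l k0 ellB).
rewrite (elliptope_sym m k0 ellB) (elliptope_sym m l ellB).
by case: (B_pm k0 l) => ->; case: (B_pm k0 m) => ->; case: (B_pm l m) => ->; lra.
Qed.

Definition shear i j (x y : R) : 'M[R]_N := 1%:M + x *: delta_mx i i + y *: delta_mx i j.

Lemma tr_shear_ecol i j x y k :
  (shear i j x y)^T *m ecol k = ecol k + (i == k)%:R *: (x *: ecol i + y *: ecol j).
Proof.
apply/matrixP => a b; rewrite ord1 -colE !mxE eqxx !andbT (eq_sym a k) (eq_sym i k).
by case: (k == i); rewrite /= ?mul1r ?mul0r ?addr0 ?mulr0; ring.
Qed.

Lemma shear_congr_entry B i j x y k l :
  (shear i j x y *m B *m (shear i j x y)^T) k l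
  = B k l + (i == k)%:R * (x * B i l + y * B j l) + (i == l)%:R * (x * B k i + y * B k j)
    + (i == k)%:R * (i == l)%:R * (x * (x * B i i + y * B i j) + y * (x * B j i + y * B j j)).
Proof.
rewrite -[LHS]bform_ecol.
have -> : forall S : 'M[R]_N, bform (S *m B *m S^T) (ecol k) (ecol l)
                              = bform B (S^T *m ecol k) (S^T *m ecol l).
  by move=> S; rewrite /bform trmx_mul trmxK !mulmxA.
by rewrite !tr_shear_ecol !bformE; ring.
Qed.

Lemma shear_congr_elliptope B i j x y : ell B ->
    x * x + 2 * x * y * B i j + y * y + 2 * (x + y * B i j) = 0 ->
  ell (shear i j x y *m B *m (shear i j x y)^T).
Proof.
move=> ellB on_ellipse; have [symB [psdB diagB]] := ellB; split; [|split].
- by rewrite !trmx_mul trmxK symB mulmxA.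
- move=> u; have := psdB ((shear i j x y)^T *m u).
  by rewrite trmx_mul trmxK !mulmxA.
- move=> k; rewrite shear_congr_entry; have [<-|_] := eqVneq i k.
    by rewrite !diagB (elliptope_sym j i ellB) !mul1r; lra.
  by rewrite diagB !mul0r !addr0.
Qed.

Lemma elliptope_entry_not_sharp B i j : ell B -> B i j ^+ 2 < 1 -> ~ sharp_vertex B.
Proof.
move=> ellB r2_lt1 [psi [c [c_gt0 psi_aff psiB psi_ge]]].
have [_ [_ diagB]] := ellB.
have neq_ij : i != j by apply: contraTneq r2_lt1 => <-; rewrite diagB expr1n ltxx.
set r := B i j in r2_lt1.
pose U k l := (i == k)%:R * B i l + (i == l)%:R * B k i - 2 * ((i == k)%:R * (i == l)%:R).
pose V k l := (i == k)%:R * B j l + (i == l)%:R * B k j - 2 * r * ((i == k)%:R * (i == l)%:R).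
pose a := c * \sum_p U p.1 p.2 * slope psi p.
pose b := c * \sum_p V p.1 p.2 * slope psi p.
have [x [y [on_ellipse dominated]]] := ellipse_not_linearly_dominated a b r2_lt1.
pose Y := shear i j x y *m B *m (shear i j x y)^T.
have ellY : ell Y := shear_congr_elliptope ellB on_ellipse.
have YE k l : Y k l - B k l = x * U k l + y * V k l.
  rewrite /Y shear_congr_entry !diagB (elliptope_sym j i ellB) -/r.
  have -> : x * (x * 1 + y * r) + y * (x * r + y * 1) = - 2 * (x + y * r) by lra.
  rewrite /U /V; ring.
have psiY : psi Y = x * \sum_p U p.1 p.2 * slope psi p + y * \sum_p V p.1 p.2 * slope psi p.
  have := affine_on_elliptope_diff psi_aff ellY ellB; rewrite psiB subr0 => ->.
  rewrite !mulr_sumr -big_split; apply: eq_bigr => p _ /=.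
  by rewrite YE /GRing.scale /=; ring.
have Yij : Y i j - B i j = x * r + y.
  by rewrite YE /U /V eqxx (negbTE neq_ij) (diagB j) -/r /=; ring.
have := le_trans (entry_le_mx_dist Y B i j) (psi_ge Y ellY).
by rewrite Yij psiY; rewrite /a /b in dominated; lra.
Qed.

Lemma sharp_vertex_ising B : ell B -> sharp_vertex B -> ising B.
Proof.
move=> ellB sharpB; apply: elliptope_sq1_ising => // k l.
have sq_le1 : B k l ^+ 2 <= 1.
  by rewrite -real_normK ?num_real // exprn_ile1 ?elliptope_norm_le1.
apply/eqP; rewrite eq_le sq_le1 leNgt /=; apply/negP => lt1.
exact: elliptope_entry_not_sharp ellB lt1 sharpB.
Qed.

Lemma affine_aut_ising f A : affine_aut f -> ising A -> ising (f A).
Proof.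
move=> f_aut isingA; have ellA := ising_elliptope isingA; have [f_ell _] := f_aut.
apply: sharp_vertex_ising (f_ell _ ellA) _.
exact/(affine_aut_sharp_vertex f_aut ellA)/ising_sharp_vertex.
Qed.

Definition pm_outer (b : {ffun 'I_N -> bool}) := outer (fun m => if b m then 1 else -1).

Lemma isingP A : ising A <-> exists b, A = pm_outer b.
Proof.
split=> [[s [s_pm ->]]|[b ->]]; last by apply: ising_outer => m; case: (b m); [left | right].
exists [ffun m => s m 0 == 1]; apply/matrixP => k l; rewrite !mxE big_ord1 mxE !ffunE.
have sE m : (if s m 0 == 1 then 1 else -1) = s m 0.
  by case: (s_pm m) => ->; rewrite ?eqxx //; case: ifP => [/eqP|] //; lra.
by rewrite !sE.
Qed.

End Elliptope.

Lemma finite_representatives (X : Type) (T : finType) (C : X -> Prop)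
    (E : X -> X -> Prop) (code : X -> T -> Prop) :
    inhabited X -> (forall f, C f -> exists t, code f t) ->
    (forall f g t, C f -> C g -> code f t -> code g t -> E f g) ->
  exists n (gs : 'I_n -> X), forall f, C f -> exists i, E f (gs i).
Proof.
move=> inhX code_ex code_E.
pose gs (i : 'I_#|T|) := epsilon inhX (fun g => C g /\ code g (enum_val i)).
exists #|T|, gs => f Cf; have [t] := code_ex f Cf; rewrite -[t]enum_rankK => ft.
have gsP : exists g, C g /\ code g (enum_val (enum_rank t)) by exists f.
have [Cg gt] := epsilon_spec inhX _ gsP.
by exists (enum_rank t); apply: code_E Cf Cg ft gt.
Qed.

Theorem lemma9 (R : realType) (N : nat) :
  (* Aut is finite: finitely many maps represent every element (as maps on G_N) *)
  (exists (n : nat) (gs : 'I_n -> ('M[R]_N -> 'M[R]_N)),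
     forall f, affine_aut f ->
       exists i : 'I_n, forall A, elliptope A -> f A = gs i A)
  /\
  (* each sigma in Aut is determined by its restriction to I *)
  (forall f g : 'M[R]_N -> 'M[R]_N, affine_aut f -> affine_aut g ->
     (forall A, ising A -> f A = g A) ->
     forall A, elliptope A -> f A = g A).
Proof.
split; last exact: affine_aut_eq_on_ising.
pose code f (h : {ffun {ffun 'I_N -> bool} -> {ffun 'I_N -> bool}}) :=
  forall b, f (pm_outer R b) = pm_outer R (h b).
apply: (finite_representatives (code := code)
          (E := fun f g => forall A, elliptope A -> f A = g A)).
- exact: inhabits id.
- move=> f f_aut.
  have image_ising b : exists b', f (pm_outer R b) = pm_outer R b'.
    by apply/isingP/affine_aut_ising/isingP; last exists b.
  have [h fh] := fin_all_exists image_ising.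
  by exists [ffun b => h b] => b; rewrite ffunE.
- move=> f g h f_aut g_aut fh gh; apply: affine_aut_eq_on_ising => // A /isingP[b ->].
  by rewrite fh gh.
Qed.
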